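(* $\mathsf{AP}(R_4,R_2)=\mathsf{AP}(R_4,R_3)=\mathsf{\Omega(1)}$.
   Context: Tuples in $\{0,1\}^4$ are written as strings $abcd$. The relations $R_1,\dots,R_5\subseteq\{0,1\}^4$ are $R_1=\{0000,1000,0100,1100,1010,0110,1001,0101,0011,1011,0111,1111\}$, $R_2=\{0000,1000,0100,1100,1010,0101,0011,1111\}$, $R_3=\{0000,1100,1010,0101,0011,1011,0111,1111\}$, $R_4=\{0000,1100,1010,0101,0011,1111\}$, $R_5=\{0000,1100,1010,0110,1001,0101,0011,1111\}$. For $R,S\subseteq\{0,1\}^4$, a Boolean function $f\colon\{0,1\}^n\to\{0,1\}$ is analogy-preserving relative to $(R,S)$ if for all $\mathbf{a},\mathbf{b},\mathbf{c},\mathbf{d}\in\{0,1\}^n$ with $(a_i,b_i,c_i,d_i)\in R$ for every $i$ and such that $(f(\mathbf{a}),f(\mathbf{b}),f(\mathbf{c}),x)\in S$ for some $x\in\{0,1\}$, we have $(f(\mathbf{a}),f(\mathbf{b}),f(\mathbf{c}),f(\mathbf{d}))\in S$; $\mathsf{AP}(R,S)$ is the set of all such functions of all arities. $\mathsf{\Omega(1)}$ is the set of all Boolean functions (of all arities) that are constant, a projection, or the negation of a projection. *)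

From mathcomp Require Import all_boot.
Set Implicit Arguments. Unset Strict Implicit. Unset Printing Implicit Defensive.

(* A relation R ⊆ {0,1}^4, given by its list of tuples (a,b,c,d);
   the string "abcd" of the paper is the tuple (a,b,c,d), 1 = true. *)
Definition rel4 := seq (bool * bool * bool * bool).

Definition inR (R : rel4) (a b c d : bool) : bool := (a, b, c, d) \in R.

Local Notation O := false.
Local Notation I := true.

Definition R1 : rel4 :=
  [:: (O,O,O,O); (I,O,O,O); (O,I,O,O); (I,I,O,O); (I,O,I,O); (O,I,I,O);
      (I,O,O,I); (O,I,O,I); (O,O,I,I); (I,O,I,I); (O,I,I,I); (I,I,I,I)].
Definition R2 : rel4 :=
  [:: (O,O,O,O); (I,O,O,O); (O,I,O,O); (I,I,O,O); (I,O,I,O); (O,I,O,I);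
      (O,O,I,I); (I,I,I,I)].
Definition R3 : rel4 :=
  [:: (O,O,O,O); (I,I,O,O); (I,O,I,O); (O,I,O,I); (O,O,I,I); (I,O,I,I);
      (O,I,I,I); (I,I,I,I)].
Definition R4 : rel4 :=
  [:: (O,O,O,O); (I,I,O,O); (I,O,I,O); (O,I,O,I); (O,O,I,I); (I,I,I,I)].
Definition R5 : rel4 :=
  [:: (O,O,O,O); (I,I,O,O); (I,O,I,O); (O,I,I,O); (I,O,O,I); (O,I,O,I);
      (O,O,I,I); (I,I,I,I)].

Definition boolfun (n : nat) := {ffun 'I_n -> bool} -> bool.

Definition AP (R S : rel4) (n : nat) (f : boolfun n) : Prop :=
  forall a b c d : {ffun 'I_n -> bool},
    (forall i : 'I_n, inR R (a i) (b i) (c i) (d i)) ->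
    (exists x : bool, inR S (f a) (f b) (f c) x) ->
    inR S (f a) (f b) (f c) (f d).

Definition Omega1 (n : nat) (f : boolfun n) : Prop :=
  (exists b : bool, forall x, f x = b) \/
  (exists i : 'I_n, forall x, f x = x i) \/
  (exists i : 'I_n, forall x, f x = ~~ x i).

(** Both R2 and R3 contain R4, which is closed under negation, so constants,
    projections and negated projections preserve analogies. Conversely, a
    non-constant f changes value along some edge (u, u') of the cube, u' being
    u with coordinate i toggled. For any v with v i = u i, the quadruples
    (u, u', v, v') and (v, v', u, u') lie coordinatewise in R4, and in R2 as in
    R3 the completions p:q::r:s and r:s::p:q with p != q are both correct only
    when r = p ([rigid]). Hence f v = f u: f depends on coordinate i alone. *)

From mathcomp Require Import all_boot.

Set Implicit Arguments.
Unset Strict Implicit.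
Unset Printing Implicit Defensive.

Definition solvable (S : rel4) (p q r : bool) : bool :=
  inR S p q r false || inR S p q r true.

Definition solves (S : rel4) (p q r s : bool) : bool :=
  solvable S p q r ==> inR S p q r s.

Definition rigid (S : rel4) : Prop :=
  forall p q r s : bool, p != q -> solves S p q r s -> solves S r s p q -> r = p.

Definition toggle n (i : 'I_n) (u : {ffun 'I_n -> bool}) : {ffun 'I_n -> bool} :=
  [ffun j => if j == i then ~~ u j else u j].

Lemma toggleK n (i : 'I_n) : involutive (toggle i).
Proof. by move=> u; apply/ffunP => j; rewrite !ffunE; case: (j == i) => //; rewrite negbK. Qed.

Lemma R4_toggle n (i : 'I_n) (u v : {ffun 'I_n -> bool}) : u i = v i ->
  forall j, inR R4 (u j) (toggle i u j) (v j) (toggle i v j).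
Proof.
move=> uv j; rewrite !ffunE; case: eqP => [->|_]; first by rewrite uv; case: (v i).
by case: (u j); case: (v j).
Qed.

Lemma R4_const b : inR R4 b b b b.
Proof. by case: b. Qed.

Lemma R4_neg p q r s : inR R4 p q r s -> inR R4 (~~ p) (~~ q) (~~ r) (~~ s).
Proof. by case: p; case: q; case: r; case: s. Qed.

Lemma R4_sub_R2 p q r s : inR R4 p q r s -> inR R2 p q r s.
Proof. by case: p; case: q; case: r; case: s. Qed.

Lemma R4_sub_R3 p q r s : inR R4 p q r s -> inR R3 p q r s.
Proof. by case: p; case: q; case: r; case: s. Qed.

Lemma rigid_R2 : rigid R2.
Proof. by case; case; case; case. Qed.

Lemma rigid_R3 : rigid R3.
Proof. by case; case; case; case. Qed.

Lemma exists_sensitive_edge n (T : eqType) (f : {ffun 'I_n -> bool} -> T) x y :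
  f x != f y ->
  exists i u, f (toggle i u) != f u.
Proof.
(* Walk from x towards y one coordinate at a time, by induction on their Hamming distance. *)
move: {2}#|_| (leqnn #|[pred j | x j != y j]|) => k.
elim: k x => [|k IHk] x dxy fxy.
  suff xy : x = y by rewrite xy eqxx in fxy.
  apply/ffunP => j; apply/eqP/negPn/negP => xyj.
  by move: dxy; rewrite (cardD1 j) inE xyj.
have [j xyj] : exists j, x j != y j.
  apply/existsP; apply: contraNT fxy => /existsPn xy.
  by apply/eqP/f_equal/ffunP => j; apply/eqP/negPn.
case: (eqVneq (f (toggle j x)) (f x)) => [fx'|]; last by exists j, x.
apply: (IHk (toggle j x)); last by rewrite fx'.
rewrite -ltnS (leq_trans _ dxy) // proper_card //; apply/properP; split.
  by apply/subsetP => l; rewrite !inE ffunE; case: ifP => [/eqP -> _|//].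
exists j; rewrite !inE ?xyj // ffunE eqxx negbK.
by move: xyj; case: (x j); case: (y j).
Qed.

Section AnalogyPreserving.

Variable S : rel4.
Hypothesis R4_sub : forall p q r s, inR R4 p q r s -> inR S p q r s.
Hypothesis S_rigid : rigid S.

Lemma AP_solves n (f : boolfun n) (a b c d : {ffun 'I_n -> bool}) : AP R4 S f ->
  (forall j, inR R4 (a j) (b j) (c j) (d j)) -> solves S (f a) (f b) (f c) (f d).
Proof.
by move=> fAP abcd; apply/implyP => /orP[] Sx; apply: fAP => //; eexists; exact: Sx.
Qed.

Lemma AP_edge_determines n (f : boolfun n) (i : 'I_n) (u v : {ffun 'I_n -> bool}) :
  AP R4 S f -> f (toggle i u) != f u -> u i = v i -> f v = f u.
Proof.
move=> fAP fu uv; apply: (S_rigid (q := f (toggle i u)) (s := f (toggle i v))).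
- by rewrite eq_sym.
- exact/(AP_solves fAP)/R4_toggle.
- exact/(AP_solves fAP)/R4_toggle.
Qed.

Lemma AP_dictator n (f : boolfun n) (i : 'I_n) (u : {ffun 'I_n -> bool}) :
  AP R4 S f -> f (toggle i u) != f u -> forall v, f v = ((v i == u i) == f u).
Proof.
move=> fAP fu v; case: (eqVneq (v i) (u i)) => [vu|vu].
  by rewrite (AP_edge_determines fAP fu (esym vu)).
transitivity (f (toggle i u)); last by move: fu; case: (f u); case: (f _).
apply: (AP_edge_determines (i := i) fAP); first by rewrite toggleK eq_sym.
by rewrite ffunE eqxx; move: vu; case: (v i); case: (u i).
Qed.

Lemma Omega1_AP n (f : boolfun n) : Omega1 f -> AP R4 S f.
Proof.
case=> [[b fb]|[[i fi]|[i fi]]] x y z w xyzw _; rewrite ?fb ?fi.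
- exact/R4_sub/R4_const.
- exact/R4_sub.
- exact/R4_sub/R4_neg.
Qed.

Lemma AP_Omega1 n (f : boolfun n) : AP R4 S f -> Omega1 f.
Proof.
move=> fAP; pose x0 : {ffun 'I_n -> bool} := [ffun => false].
have [f_const|/forallPn[y fy]] := boolP [forall x, f x == f x0].
  by left; exists (f x0) => x; apply/eqP/(forallP f_const).
have [i [u fu]] := exists_sensitive_edge fy.
right; have f_dict := AP_dictator fAP fu.
case: (eqVneq (u i) (f u)) => [fui|/negPf fui]; [left|right]; exists i => v;
  by rewrite f_dict; move: fui; case: (f u); case: (u i); case: (v i).
Qed.

Lemma AP_R4_Omega1 n (f : boolfun n) : AP R4 S f <-> Omega1 f.
Proof. by split; [exact: AP_Omega1 | exact: Omega1_AP]. Qed.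

End AnalogyPreserving.

Theorem mainTheorem15 :
  (forall (n : nat) (f : boolfun n), AP R4 R2 f <-> Omega1 f) /\
  (forall (n : nat) (f : boolfun n), AP R4 R3 f <-> Omega1 f).
Proof.
split=> n f; apply: AP_R4_Omega1.
- exact: R4_sub_R2.
- exact: rigid_R2.
- exact: R4_sub_R3.
- exact: rigid_R3.
Qed.
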